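(* For every $n\geq3$, the dominating ideal $DI(C_n)=\bigcap_{i=1}^n(x_i,x_{i+1},x_{i+2})\subset K[x_1,\ldots,x_n]$ (indices modulo $n$) of the cycle $C_n$ is nearly normally torsion-free.
   Context: $C_n$ is the cycle with vertices $x_1,\ldots,x_n$ and edges $\{x_i,x_{i+1}\}$ ($1\le i\le n-1$) and $\{x_n,x_1\}$. For a simple graph $G$, $N_G[i]=\{j:\{i,j\}\in E(G)\}\cup\{i\}$; $S\subseteq V(G)$ is a dominating set if $S\cap N_G[v]\neq\emptyset$ for all $v$, and $DI(G)=(\prod_{i\in S}x_i : S\text{ a minimal dominating set})$. A monomial ideal $I\subset R$ is nearly normally torsion-free if there exist a positive integer $k$ and a monomial prime ideal $\mathfrak p$ such that $\mathrm{Ass}(R/I^m)=\mathrm{Min}(I)$ for all $1\le m\le k$ and $\mathrm{Ass}(R/I^m)\subseteq\mathrm{Min}(I)\cup\{\mathfrak p\}$ for all $m\geq k+1$, where $\mathrm{Ass}$ and $\mathrm{Min}$ denote associated and minimal primes. *)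

From mathcomp Require Import all_boot all_order all_algebra.
From mathcomp Require Import mpoly.
Set Implicit Arguments. Unset Strict Implicit. Unset Printing Implicit Defensive.
Import GRing.Theory.
Local Open Scope ring_scope.

Section Ideals.
Variable R : comNzRingType.

Definition gen_ideal (G : R -> Prop) : R -> Prop :=
  fun f => exists s : seq (R * R),
    (forall p, p \in s -> G p.2) /\ f = \sum_(p <- s) p.1 * p.2.

Definition ideal_pow (I : R -> Prop) (m : nat) : R -> Prop :=
  gen_ideal (fun f => exists s : seq R,
     size s = m /\ (forall a, a \in s -> I a) /\ f = \prod_(a <- s) a).

Definition is_ideal (I : R -> Prop) : Prop :=
  I 0 /\ (forall a b, I a -> I b -> I (a + b)) /\ (forall r a, I a -> I (r * a)).

Definition prime_ideal (P : R -> Prop) : Prop :=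
  is_ideal P /\ ~ P 1 /\ (forall a b, P (a * b) -> P a \/ P b).

Definition subideal (I J : R -> Prop) : Prop := forall f, I f -> J f.
Definition same_ideal (I J : R -> Prop) : Prop := forall f, I f <-> J f.

Definition colon (I : R -> Prop) (f : R) : R -> Prop := fun g => I (g * f).

Definition is_ass (I : R -> Prop) (P : R -> Prop) : Prop :=
  prime_ideal P /\ exists f : R, same_ideal P (colon I f).

Definition is_min_prime (I : R -> Prop) (P : R -> Prop) : Prop :=
  prime_ideal P /\ subideal I P /\
  (forall Q, prime_ideal Q -> subideal I Q -> subideal Q P -> subideal P Q).
End Ideals.

Section Poly.
Variables (n : nat) (K : fieldType).
Local Notation R := {mpoly K[n]}.

Definition monomial_prime (p : R -> Prop) : Prop :=
  exists A : {set 'I_n},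
    same_ideal p (gen_ideal (fun f : R => exists i, i \in A /\ f = 'X_i)).

Definition monomial_ideal (I : R -> Prop) : Prop :=
  exists G : R -> Prop, (forall f, G f -> exists m : 'X_{1..n}, f = 'X_[m])
    /\ same_ideal I (gen_ideal G).

Definition nearly_normally_torsion_free (I : R -> Prop) : Prop :=
  monomial_ideal I /\
  exists (k : nat) (p : R -> Prop),
    (0 < k)%N /\ monomial_prime p /\
    (forall m, (1 <= m <= k)%N ->
        forall P, is_ass (ideal_pow I m) P <-> is_min_prime I P) /\
    (forall m, (k + 1 <= m)%N ->
        forall P, is_ass (ideal_pow I m) P -> is_min_prime I P \/ same_ideal P p).
End Poly.

(* vertices 'I_n (x_1..x_n are 'X_0..'X_(n-1)); edges {i, i+1 mod n} *)
Definition cycle_adj (n : nat) (i j : 'I_n) : bool :=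
  ((val j == (val i).+1 %% n)%N || (val i == (val j).+1 %% n)%N).

Definition closed_nbhd (n : nat) (i : 'I_n) : {set 'I_n} :=
  [set j | (j == i) || cycle_adj i j].

Definition dominating (n : nat) (S : {set 'I_n}) : bool :=
  [forall v : 'I_n, S :&: closed_nbhd v != set0].

Definition minimal_dominating (n : nat) (S : {set 'I_n}) : bool :=
  dominating S && [forall T : {set 'I_n}, (T \proper S) ==> ~~ dominating T].

Definition DI_cycle (n : nat) (K : fieldType) : {mpoly K[n]} -> Prop :=
  gen_ideal (fun f : {mpoly K[n]} => exists S : {set 'I_n},
     minimal_dominating S /\ f = \prod_(i in S) 'X_i).
Arguments DI_cycle n K : clear implicits.

From mathcomp Require Import all_boot all_order all_algebra.
From mathcomp Require Import mpoly zify.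
From Stdlib Require Import Classical ClassicalEpsilon.
Set Implicit Arguments. Unset Strict Implicit. Unset Printing Implicit Defensive.

(* Theorem 3.9: for n >= 3 the dominating ideal I = DI(C_n) of the cycle is
   nearly normally torsion-free, with k = 1 and p the maximal ideal.

   Everything is phrased through support ideals: for an up-closed set D of
   exponent vectors, the polynomials all of whose monomials lie in D.
   1. For a set A of variables, Q_A^m (monomials of A-degree >= m) is an ideal,
      Q_A^1 = (x_i : i in A) is prime and Q_A^m is Q_A^1-primary; the latter
      is seen through the grading x_i |-> t x_i (i in A).  Consequently every
      prime of the form (Q_W1^m /\ ... /\ Q_Wr^m : f) is one of the Q_Wi^1.
   2. Combinatorics of C_n: closed neighbourhoods are 3-sets, none contained in
      another; and if the exponent u has N[v]-degree >= m for every N[v] not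
      containing j, then x^u x_j^m is a product of m dominating monomials.
   3. I^m is the support ideal of exponents bounded below by a sum of m
      dominating sets; hence I^m lies in every Q_{N[v]}^m, the minimal primes
      of I are the Q_{N[v]}^1, each equal to (I : x^(complement of N[v])), and
      Ass(I) = Min(I).  For m >= 2 an associated prime P of I^m either misses
      some x_j, and then by 2 it is the colon of an intersection of the
      Q_{N[v]}^m (j not in N[v]), so minimal by 1, or it is the maximal ideal. *)

Import GRing.Theory.

Section Ideals.
Variable R : comNzRingType.
Implicit Types (I J P Q : R -> Prop) (G : R -> Prop).
Local Open Scope ring_scope.

Lemma gen_ideal_is_ideal G : is_ideal (gen_ideal G).
Proof.
split; [|split].
- by exists [::]; split => //; rewrite big_nil.
- move=> a b [s [Hs ->]] [t [Ht ->]]; exists (s ++ t); split.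
    by move=> p; rewrite mem_cat => /orP [/Hs|/Ht].
  by rewrite big_cat.
- move=> r a [s [Hs ->]]; exists [seq (r * p.1, p.2) | p <- s]; split.
    by move=> p /mapP [q Hq ->] /=; apply: Hs.
  by rewrite big_map mulr_sumr; apply: eq_bigr => p _; rewrite mulrA.
Qed.

Lemma gen_ideal_in G g : G g -> gen_ideal G g.
Proof.
move=> Hg; exists [:: (1, g)]; split; first by move=> p; rewrite inE => /eqP ->.
by rewrite big_seq1 mul1r.
Qed.

Lemma ideal_sum J (T : eqType) (r : seq T) (F : T -> R) :
  is_ideal J -> (forall x, x \in r -> J (F x)) -> J (\sum_(x <- r) F x).
Proof.
move=> [J0 [JD JM]]; elim: r => [|x r IH] H; first by rewrite big_nil.
rewrite big_cons; apply: JD; first by apply: H; rewrite inE eqxx.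
by apply: IH => y Hy; apply: H; rewrite inE Hy orbT.
Qed.

Lemma gen_ideal_sub G J : is_ideal J -> (forall g, G g -> J g) ->
  subideal (gen_ideal G) J.
Proof.
move=> HJ HG f [s [Hs ->]]; apply: ideal_sum => // p Hp.
by case: HJ => _ [_ JM]; apply: JM; apply: HG; apply: Hs.
Qed.

Lemma idealMl J a b : is_ideal J -> J b -> J (a * b).
Proof. by move=> [_ [_ JM]]; apply: JM. Qed.

Lemma idealMr J a b : is_ideal J -> J a -> J (a * b).
Proof. by move=> HJ Ha; rewrite mulrC; apply: idealMl. Qed.

Lemma colon_ideal J f : is_ideal J -> is_ideal (colon J f).
Proof.
move=> [J0 [JD JM]]; split; [by rewrite /colon mul0r|split].
  by move=> a b Ha Hb; rewrite /colon mulrDl; apply: JD.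
by move=> r a Ha; rewrite /colon -mulrA; apply: JM.
Qed.

Lemma prime_prod P (T : eqType) (r : seq T) (F : T -> R) :
  prime_ideal P -> P (\prod_(x <- r) F x) -> exists2 x, x \in r & P (F x).
Proof.
move=> [HI [P1 Pp]]; elim: r => [|x r IH]; first by rewrite big_nil.
rewrite big_cons => /Pp [Hx|Hr]; first by exists x; rewrite ?inE ?eqxx.
by case: (IH Hr) => y Hy Py; exists y; rewrite ?inE ?Hy ?orbT.
Qed.

Lemma prime_exp P a k : prime_ideal P -> P (a ^+ k) -> P a.
Proof.
move=> HP; elim: k => [|k IH]; first by rewrite expr0; case: HP => _ [].
by rewrite exprS; case: HP => _ [_ Pp] /Pp [].
Qed.

Lemma prime_same P Q : same_ideal P Q -> prime_ideal P -> prime_ideal Q.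
Proof.
move=> E [[P0 [PD PM]] [P1 Pp]]; split; [split; [|split]|split].
- by apply/E.
- by move=> a b /E Ha /E Hb; apply/E; apply: PD.
- by move=> r a /E Ha; apply/E; apply: PM.
- by move/E.
- by move=> a b /E /Pp [] /E; [left|right].
Qed.

Lemma min_prime_same I P Q :
  same_ideal P Q -> is_min_prime I P -> is_min_prime I Q.
Proof.
move=> E [HP [HIP Hmin]]; split; first exact: prime_same E HP.
split; first by move=> g /HIP /E.
move=> Q' HQ' HIQ' HQ'Q g /E Hg; apply: (Hmin Q' HQ' HIQ') => // h /HQ'Q /E //.
Qed.

End Ideals.
Arguments idealMr [R J a b]. Arguments idealMl [R J a b].

Section SupportIdeals.
Variables (n : nat) (K : fieldType).
Local Notation R := {mpoly K[n]}.
Implicit Types (D E : 'X_{1..n} -> Prop) (g h : R) (A : {set 'I_n}).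
Local Open Scope ring_scope.

Definition supp_in D g := forall u, u \in msupp g -> D u.

Definition upclosed D := forall u v, D u -> (u <= v)%MM -> D v.

Lemma supp_in0 D : supp_in D 0.
Proof. by move=> u; rewrite msupp0. Qed.

Lemma supp_inD D g h : supp_in D g -> supp_in D h -> supp_in D (g + h).
Proof. by move=> Hg Hh u /msuppD_le; rewrite mem_cat => /orP [/Hg|/Hh]. Qed.

Lemma supp_inM D E g h : supp_in D g -> supp_in E h ->
  supp_in (fun u => exists a b, D a /\ E b /\ u = (a + b)%MM) (g * h).
Proof.
move=> Hg Hh u /msuppM_le /allpairsP [[a b] /= [Ha Hb ->]].
by exists a, b; split; [apply: Hg|split; [apply: Hh|]].
Qed.

Lemma supp_in_weaken D E g : (forall u, D u -> E u) -> supp_in D g -> supp_in E g.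
Proof. by move=> H Hg u /Hg /H. Qed.

Lemma supp_in_ideal D : upclosed D -> is_ideal (supp_in D).
Proof.
move=> HD; split; [exact: supp_in0|split; first by move=> a b; apply: supp_inD].
move=> r a Ha u /(supp_inM (D := fun _ => True) (g := r) (fun _ _ => I) Ha).
move=> [x [y [_ [Hy ->]]]].
by apply: HD Hy _; apply: lem_addl.
Qed.

Lemma supp_inX D u : D u -> supp_in D 'X_[u].
Proof. by move=> Hu v; rewrite msuppX inE => /eqP ->. Qed.

Lemma supp_inXM D w g : supp_in D g ->
  supp_in (fun u => exists2 a, D a & u = (w + a)%MM) ('X_[w] * g).
Proof.
move=> Hg u /(supp_inM (supp_inX (D := fun x => x = w) erefl) Hg).
by move=> [a [b [-> [Hb ->]]]]; exists b.
Qed.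

Lemma supp_in_subideal D (J : R -> Prop) : is_ideal J ->
  (forall u, D u -> J 'X_[u]) -> subideal (supp_in D) J.
Proof.
move=> HJ HX g Hg; rewrite (mpolyE g); apply: ideal_sum => // u Hu.
by rewrite -mul_mpolyC; apply: idealMl => //; apply: HX; apply: Hg.
Qed.

Definition pdeg A (u : 'X_{1..n}) := (\sum_(i in A) u i)%N.

Lemma pdeg_le A u v : (u <= v)%MM -> (pdeg A u <= pdeg A v)%N.
Proof. by move/mnm_lepP => H; apply: leq_sum => i _. Qed.

Lemma pdegD A u v : pdeg A (u + v)%MM = (pdeg A u + pdeg A v)%N.
Proof. by rewrite /pdeg -big_split; apply: eq_bigr => i _; rewrite mnmDE. Qed.

Lemma pdegMn A (u : 'X_{1..n}) k : pdeg A (u *+ k)%MM = (pdeg A u * k)%N.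
Proof. by rewrite /pdeg big_distrl /=; apply: eq_bigr => i _; exact: mulmnE. Qed.

Lemma pdeg_gt0 A u : (0 < pdeg A u)%N -> exists2 i, i \in A & (0 < u i)%N.
Proof.
move=> H; case: (boolP [exists i, (i \in A) && (0 < u i)%N]).
  by move/existsP => [i /andP [Hi Hu]]; exists i.
move/existsPn => Hn; move: H; rewrite /pdeg big1 // => i Hi.
by move: (Hn i); rewrite Hi /= -leqNgt leqn0 => /eqP.
Qed.

Lemma pdeg_unit A (i : 'I_n) : i \in A -> pdeg A U_(i)%MM = 1%N.
Proof.
move=> Hi; rewrite /pdeg (bigD1 i) //= mnm1E eqxx big1 // => j /andP [_ Hj].
by rewrite mnm1E eq_sym (negbTE Hj).
Qed.

(* Qpow A m: the monomials of A-degree >= m, i.e. the ideal (x_i : i in A)^m. *)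
Definition Qpow A m := supp_in (fun u => (m <= pdeg A u)%N).

Lemma Qpow_ideal A m : is_ideal (Qpow A m).
Proof. by apply: supp_in_ideal => u v Hu Huv; apply: leq_trans Hu (pdeg_le _ Huv). Qed.

Lemma Qpow1_X A (i : 'I_n) : i \in A -> Qpow A 1 'X_i.
Proof. by move=> Hi; apply: supp_inX; rewrite pdeg_unit. Qed.

Lemma Qpow1_notX A (w : 'X_{1..n}) : pdeg A w = 0%N -> ~ Qpow A 1 'X_[w].
Proof. by move=> Hw /(_ w); rewrite msuppX inE eqxx Hw => /(_ isT). Qed.

Lemma mpolyX_split (u : 'X_{1..n}) (i : 'I_n) :
  (0 < u i)%N -> 'X_[u] = 'X_[(u - U_(i))%MM] * ('X_i : R).
Proof.
move=> H; rewrite -mpolyXD submK //; apply/mnm_lepP => j.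
by rewrite mnm1E; case: eqP => [<-|] //.
Qed.

Lemma Qpow1_sub A (P : R -> Prop) : is_ideal P ->
  (forall i, i \in A -> P 'X_i) -> subideal (Qpow A 1) P.
Proof.
move=> HP HX; apply: supp_in_subideal => // u /pdeg_gt0 [i Hi Hu].
by rewrite (mpolyX_split Hu); apply: idealMl => //; apply: HX.
Qed.

Definition var_ideal A : R -> Prop :=
  gen_ideal (fun f : R => exists i, i \in A /\ f = 'X_i).

Lemma var_ideal_Qpow A : same_ideal (var_ideal A) (Qpow A 1).
Proof.
move=> g; split.
  apply: gen_ideal_sub; first exact: Qpow_ideal.
  by move=> f [i [Hi ->]]; apply: Qpow1_X.
by apply: Qpow1_sub; [exact: gen_ideal_is_ideal|move=> i Hi; apply: gen_ideal_in; exists i].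
Qed.

Lemma prime_all_vars (P : R -> Prop) : prime_ideal P -> (forall j, P 'X_j) ->
  same_ideal P (var_ideal [set: 'I_n]).
Proof.
move=> HP HX; have HPi : is_ideal P by case: HP.
have Hsub : subideal (Qpow [set: 'I_n] 1) P by apply: Qpow1_sub => // i _.
suff E : same_ideal P (Qpow [set: 'I_n] 1).
  by move=> g; rewrite E; split => /(var_ideal_Qpow _ g).
move=> g; split; last exact: Hsub.
move=> Pg; set c := g@_0%MM; set h := g - c%:MP.
have Hh : Qpow [set: 'I_n] 1 h.
  move=> u Hu; case: (boolP [exists i, u i != 0%N]).
    case/existsP => i Hi; rewrite /pdeg (bigD1 i) ?in_setT //=; rewrite -lt0n in Hi.
    exact: leq_trans Hi (leq_addr _ _).
  move/existsPn => H0; have Eu : u = 0%MM.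
    by apply/mnmP => i; rewrite mnm0E; move: (H0 i); rewrite negbK => /eqP.
  move: Hu; rewrite Eu mcoeff_msupp /h mcoeffB mcoeffC eqxx mulr1 subrr eqxx //.
have Pc : P c%:MP.
  have -> : c%:MP = g - h by rewrite /h opprB addrC subrK.
  case: HPi => _ [PD PM]; apply: PD => //.
  by rewrite -mulN1r; apply: PM; apply: Hsub.
case: (eqVneq c 0) => Hc; first by move: Hh; rewrite /h Hc mpolyC0 subr0.
exfalso; case: HP => _ [P1 _]; apply: P1.
have -> : (1 : R) = (c^-1)%:MP * c%:MP by rewrite -mpolyCM mulVf // mpolyC1.
by case: HPi => _ [_ PM]; apply: PM.
Qed.

End SupportIdeals.

Section LowCoefs.
Variable S : idomainType.
Local Open Scope ring_scope.

Lemma low_coefs_cancel (G H : {poly S}) (m : nat) :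
  G`_0 != 0 -> (forall k, (k < m)%N -> (G * H)`_k = 0) ->
  forall k, (k < m)%N -> H`_k = 0.
Proof.
move=> G0 HGH; elim/ltn_ind => k IH Hkm.
move: (HGH k Hkm); rewrite coefM big_ord_recl /= subn0.
have -> : \sum_(i < k) G`_(bump 0 i) * H`_(k - bump 0 i) = 0.
  apply: big1 => i _.
  have Hi : (k - bump 0 i < k)%N.
    have Hk0 : (0 < k)%N by apply: leq_ltn_trans (ltn_ord i); exact: leq0n.
    by rewrite ltn_subrL Hk0.
  by rewrite (IH _ Hi (ltn_trans Hi Hkm)) mulr0.
by rewrite addr0 => /eqP; rewrite mulf_eq0 (negbTE G0) orFb => /eqP.
Qed.

End LowCoefs.

(* Q_A^1 is prime and Q_A^m is Q_A^1-primary, via the grading t^(A-degree). *)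
Section Primary.
Variables (n : nat) (K : fieldType) (A : {set 'I_n}).
Local Notation R := {mpoly K[n]}.
Local Open Scope ring_scope.

Definition grade_coef : {rmorphism K -> {poly R}} := polyC \o (@mpolyC n K).
Definition grade_var (i : 'I_n) : {poly R} :=
  if i \in A then 'X * ('X_i)%:P else ('X_i)%:P.

(* grade g = g(x_i |-> t x_i for i in A) in R[t]: the coefficient of t^k
   collects the monomials of g of A-degree k. *)
Definition grade (g : R) : {poly R} := mmap grade_coef grade_var g.

Lemma gradeM g h : grade (g * h) = grade g * grade h.
Proof. by rewrite /grade rmorphM. Qed.

Lemma grade_monomial u : mmap1 grade_var u = 'X^(pdeg A u) * ('X_[u])%:P.
Proof.
rewrite /mmap1 /pdeg mpolyXE_id rmorph_prod.
rewrite (eq_bigr (fun i => 'X ^+ (if i \in A then u i else 0%N) * (('X_i)^+ u i)%:P)).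
  by rewrite big_split /= prodrXr -big_mkcond.
move=> i _; rewrite /grade_var rmorphXn; case: ifP => _; last by rewrite expr0 mul1r.
by rewrite exprMn.
Qed.

Lemma coef_grade g k w : ((grade g)`_k)@_w = if pdeg A w == k then g@_w else 0.
Proof.
rewrite /grade /mmap coef_sum.
rewrite (eq_bigr (fun u => if pdeg A u == k then (g@_u)%:MP * 'X_[u] else 0)); last first.
  move=> u _; rewrite grade_monomial /= mulrA [_ * 'X^_]mulrC -mulrA coefXnM coefCM coefC.
  rewrite subn_eq0 [pdeg A u == k]eq_sym; case: ltngtP => H //=; by rewrite mulr0.
rewrite -big_mkcond /= raddf_sum /=.
rewrite (eq_bigr (fun u => g@_u * (u == w)%:R)); last by move=> u _; rewrite mcoeffCM mcoeffX.
case: (boolP (w \in msupp g)) => Hw.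
  rewrite big_mkcond (bigD1_seq w) //= big1 ?addr0.
    by case: eqP => _; rewrite ?eqxx ?mulr1.
  by move=> u /negbTE Hu; rewrite Hu; case: ifP => // _; rewrite mulr0.
rewrite big1 ?(memN_msupp_eq0 Hw) ?if_same // => u _.
case: eqP => [E|]; last by rewrite mulr0.
by move: Hw; rewrite -E => /memN_msupp_eq0 ->; rewrite mul0r.
Qed.

Lemma grade_low_coef g k :
  (forall u, u \in msupp g -> (k < pdeg A u)%N) -> (grade g)`_k = 0.
Proof.
move=> H; apply/mpolyP => w; rewrite coef_grade mcoeff0.
by case: eqP => // E; apply: memN_msupp_eq0; apply/negP => /H; rewrite E ltnn.
Qed.

Lemma Qpow_primary m (g h : R) : Qpow A m (g * h) -> ~ Qpow A 1 g -> Qpow A m h.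
Proof.
move=> Hgh Hg.
have [u Hu Hu0] : exists2 u, u \in msupp g & pdeg A u = 0%N.
  case: (boolP (all (fun u => 0 < pdeg A u)%N (msupp g))).
    by move/allP => H; exfalso; apply: Hg => u /H.
  by case/allPn => u Hu; rewrite lt0n negbK => /eqP; exists u.
have G0 : (grade g)`_0 != 0.
  apply/eqP => E; move: Hu; rewrite mcoeff_msupp -(_ : ((grade g)`_0)@_u = g@_u).
    by rewrite E mcoeff0 eqxx.
  by rewrite coef_grade Hu0 eqxx.
have Hlow : forall k, (k < m)%N -> (grade h)`_k = 0.
  apply: (low_coefs_cancel G0) => k Hkm; rewrite -gradeM.
  by apply: grade_low_coef => w /Hgh; apply: leq_trans Hkm.
move=> w Hw; rewrite leqNgt; apply/negP => Hlt.
move: Hw; rewrite mcoeff_msupp -(_ : ((grade h)`_(pdeg A w))@_w = h@_w).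
  by rewrite Hlow // mcoeff0 eqxx.
by rewrite coef_grade eqxx.
Qed.

Lemma Qpow1_prime : prime_ideal (Qpow (K:=K) A 1).
Proof.
split; first exact: Qpow_ideal.
split.
  move=> /(_ 0%MM); rewrite msupp1 inE eqxx => /(_ isT).
  by rewrite /pdeg big1 // => i _; rewrite mnm0E.
move=> a b Hab; case: (classic (Qpow A 1 a)) => Ha; [by left|right].
exact: Qpow_primary Hab Ha.
Qed.

End Primary.

Section Intersections.
Variables (n : nat) (K : fieldType).
Local Notation R := {mpoly K[n]}.
Local Open Scope ring_scope.

Definition Qinter (Ws : seq {set 'I_n}) (m : nat) : R -> Prop :=
  supp_in (fun u => forall W, W \in Ws -> (m <= pdeg W u)%N).

Lemma Qinter_Qpow (Ws : seq {set 'I_n}) m W (g : R) :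
  W \in Ws -> Qinter Ws m g -> Qpow W m g.
Proof. by move=> HW H u /H; apply. Qed.

Lemma Qpow_Qinter (Ws : seq {set 'I_n}) m (g : R) :
  (forall W, W \in Ws -> Qpow W m g) -> Qinter Ws m g.
Proof. by move=> H u Hu W HW; apply: H. Qed.

Lemma colon_avoid (P : R -> Prop) (Ws : seq {set 'I_n}) m (f : R) : prime_ideal P ->
  (forall W, W \in Ws -> ~ subideal (colon (Qpow W m) f) P) ->
  exists g, ~ P g /\ (forall W, W \in Ws -> Qpow W m (g * f)).
Proof.
move=> HP; elim: Ws => [|W Ws IH] H.
  by exists 1; split => //; case: HP => _ [].
have [g [Pg Hg]] : exists g, ~ P g /\ (forall W, W \in Ws -> Qpow W m (g * f)).
  by apply: IH => W' HW'; apply: H; rewrite inE HW' orbT.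
have [g' Hg' Pg'] : exists2 g', Qpow W m (g' * f) & ~ P g'.
  have := H W (mem_head _ _); rewrite /subideal => /not_all_ex_not [g' Hg'].
  by case: (imply_to_and _ _ Hg') => H1 H2; exists g'.
exists (g' * g); split; first by case: HP => _ [_ Pp] /Pp [].
move=> W' /predU1P [->|HW'].
  by rewrite mulrAC; apply: (idealMr (Qpow_ideal _ _ _)).
by rewrite -mulrA; apply: (idealMl (Qpow_ideal _ _ _)); apply: Hg.
Qed.

Lemma ass_Qinter (Ws : seq {set 'I_n}) m (f : R) (P : R -> Prop) :
  (0 < m)%N -> prime_ideal P -> same_ideal P (colon (Qinter Ws m) f) ->
  exists2 W, W \in Ws & same_ideal P (Qpow W 1).
Proof.
move=> Hm HP HPT.
have [W HW HWP] : exists2 W, W \in Ws & subideal (colon (Qpow W m) f) P.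
  apply: NNPP => C.
  have [g [Pg Hg]] := colon_avoid HP (fun W HW HS => C (ex_intro2 _ _ W HW HS)).
  by apply: Pg; apply/HPT; apply: Qpow_Qinter.
have PW : forall g, P g -> Qpow W m (g * f).
  by move=> g /HPT Hg; apply: Qinter_Qpow HW Hg.
have Nf : ~ Qpow W m f.
  by move=> Hf; case: HP => _ [P1 _]; apply: P1; apply: HWP; rewrite /colon mul1r.
exists W => // g; split.
  by move=> Pg; apply: NNPP => Hg; apply: Nf; exact: Qpow_primary (PW g Pg) Hg.
have HPi : is_ideal P by case: HP.
apply: supp_in_subideal => // u Hu; apply: (@prime_exp _ _ _ m HP).
apply: HWP; rewrite /colon mpolyXn; apply: (idealMr (Qpow_ideal _ _ _)).
by apply: supp_inX; rewrite pdegMn -[X in (X <= _)%N]mul1n leq_mul2r Hu orbT.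
Qed.

End Intersections.

Section Cycle.
Variable n : nat.
Hypothesis n3 : (2 < n)%N.
Local Notation Nb := (@closed_nbhd n).

Lemma n_gt0 : (0 < n)%N. Proof. exact: ltn_trans n3. Qed.

Definition csucc (v : 'I_n) : 'I_n := Ordinal (ltn_pmod v.+1 n_gt0).

Lemma csucc_val (v : 'I_n) : val (csucc v) = if v.+1 == n then 0%N else v.+1.
Proof.
rewrite /=; case: eqP => [->|H]; first by rewrite modnn.
by rewrite modn_small // ltn_neqAle ltn_ord andbT; apply/eqP.
Qed.

Lemma cpred_lt (v : 'I_n) : ((if (v : nat) == 0 then n.-1 else (v : nat).-1) < n)%N.
Proof. have := ltn_ord v; have := n3; case: eqP => _; lia. Qed.

Definition cpred (v : 'I_n) : 'I_n := Ordinal (cpred_lt v).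

Lemma csucc_inj : injective csucc.
Proof.
move=> v w /(congr1 val); rewrite !csucc_val => E; apply: val_inj => /=.
have := ltn_ord v; have := ltn_ord w; move: E; do 2 case: eqP; lia.
Qed.

Lemma cpredK v : csucc (cpred v) = v.
Proof.
apply: val_inj; rewrite csucc_val /=; have := n3; case: v => x Hx /=.
by case: x Hx => [|x] Hx /=; case: ifP => /eqP; lia.
Qed.

Lemma eq_csucc v w : (v == csucc w) = (w == cpred v).
Proof.
apply/eqP/eqP => [->|->]; last by rewrite cpredK.
by apply: csucc_inj; rewrite cpredK.
Qed.

Lemma nbhdE (v w : 'I_n) : (w \in Nb v) = [|| w == v, w == csucc v | w == cpred v].
Proof.
have adjE : cycle_adj v w = (w == csucc v) || (v == csucc w).
  by rewrite /cycle_adj -[w == csucc v]val_eqE -[v == csucc w]val_eqE.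
by rewrite /closed_nbhd inE adjE [v == csucc w]eq_csucc.
Qed.

Lemma card_nbhd (v : 'I_n) : #|Nb v| = 3%N.
Proof.
have -> : Nb v = [set v; csucc v; cpred v] by apply/setP => w; rewrite nbhdE !inE orbA.
have Hsp : (csucc v == cpred v) = false.
  apply/negbTE/eqP => /(congr1 val); rewrite csucc_val /=; have := n3.
  by case: v => x Hx /=; case: x Hx => [|x] Hx /=; case: eqP; lia.
have Hs : (v == csucc v) = false.
  by apply/negbTE/eqP => /(congr1 val); rewrite csucc_val; case: v {Hsp} => x Hx /=; case: eqP; lia.
have Hp : (v == cpred v) = false.
  by apply/negbTE/eqP => /(congr1 val) /=; case: v {Hsp Hs} => x Hx /=; case: eqP; lia.
rewrite setUC !cardsU1 cards1 !inE.
by rewrite eq_sym Hp eq_sym Hsp Hs.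
Qed.

Lemma nbhd_sub_eq (v w : 'I_n) : Nb w \subset Nb v -> Nb w = Nb v.
Proof. by move=> H; apply/eqP; rewrite eqEcard H !card_nbhd. Qed.

End Cycle.

Lemma count_residues_hit m a b :
  (count (fun c => has (fun t => t %% m == c) (iota a b)) (iota 0 m) <= b)%N.
Proof.
elim: b a => [|b IH] a; first by rewrite /= (eq_count (a2 := pred0)) ?count_pred0.
set p := (fun c => a %% m == c).
set q := (fun c => has (fun t => t %% m == c) (iota a.+1 b)).
apply: (@leq_trans (count (predU p q) (iota 0 m))); first by apply: sub_count => c /=.
apply: (@leq_trans (count p (iota 0 m) + count q (iota 0 m))).
  by rewrite -count_predUI leq_addr.
rewrite -add1n; apply: leq_add; last exact: IH.
rewrite (eq_count (a2 := pred1 (a %% m))); last by move=> c; rewrite /p /= eq_sym.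
by rewrite count_uniq_mem ?iota_uniq //; case: (_ \in _).
Qed.

Lemma residue_in_window m s c :
  (c < m)%N -> exists t, [/\ (s <= t)%N, (t < s + m)%N & t %% m = c].
Proof.
move=> Hc; have Hm : (0 < m)%N by apply: leq_ltn_trans Hc.
have E := divn_eq s m; have Hr := ltn_pmod s Hm.
case: (leqP (s %% m) c) => H.
  exists (s + (c - s %% m)); split; [lia|lia|].
  have -> : s + (c - s %% m) = s %/ m * m + c by lia.
  by rewrite modnMDl modn_small.
exists (s + (m - s %% m + c)); split; [lia|lia|].
have -> : s + (m - s %% m + c) = (s %/ m).+1 * m + c by rewrite mulSn; lia.
by rewrite modnMDl modn_small.
Qed.

(* Fix a vertex j, an integer m and weights u on the
   vertices such that every neighbourhood avoiding j has weight >= m.  Walking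
   round the cycle from j+1 to j-1, give the k-th vertex the interval
   [Pf k, Pf k + u) of a tape; the set cover c consists of j and of the
   vertices whose interval contains a point congruent to c mod m.  A vertex
   i <> j lies in at most u i of the m sets cover c, and each cover c is
   dominating: a neighbourhood avoiding j consists of three consecutive
   vertices whose intervals together have length >= m. *)
Section Covering.
Variable n : nat.
Hypothesis n3 : (2 < n)%N.
Variables (j : 'I_n) (m : nat) (u : 'I_n -> nat).
Local Notation Nb := (@closed_nbhd n).

Definition walk k : 'I_n := iter k.+1 (csucc n3) j.

Lemma walk_val k : (walk k : nat) = (j + k.+1) %% n.
Proof.
elim: k => [|k IH]; first by rewrite /= addn1.
rewrite (_ : (walk k.+1 : nat) = (walk k).+1 %% n) //.
by rewrite IH -addn1 modnDml addn1 !addnS.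
Qed.

Lemma csucc_walk k : csucc n3 (walk k) = walk k.+1.
Proof. by []. Qed.

Lemma walk_last : walk n.-1 = j.
Proof.
apply: ord_inj; rewrite walk_val prednK ?(ltn_trans _ n3) // modnDr modn_small //.
Qed.

Lemma walk_inj k k' : (k < n)%N -> (k' < n)%N -> walk k = walk k' -> k = k'.
Proof.
move=> Hk Hk' /(congr1 (@nat_of_ord n)); rewrite !walk_val !addnS -!addSn => /eqP.
by rewrite eqn_modDl !modn_small // => /eqP.
Qed.

Lemma walk_surj (v : 'I_n) : exists2 k, (k < n)%N & walk k = v.
Proof.
exists ((v + (n - j.+1)) %% n); first by rewrite ltn_pmod // (ltn_trans _ n3).
apply: ord_inj; rewrite walk_val addnS -addSn modnDmr.
have -> : j.+1 + (v + (n - j.+1)) = v + n by have := ltn_ord j; lia.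
by rewrite modnDr modn_small.
Qed.

Lemma walk_nbhd (v : 'I_n) : j \notin Nb v -> exists a,
  [/\ (a.+2 < n.-1)%N, cpred n3 v = walk a, v = walk a.+1 & csucc n3 v = walk a.+2].
Proof.
move=> Hj; have [k0 Hk0 Ev] := walk_surj v.
have Hn1 : k0 != n.-1.
  by apply/eqP => E; move: Hj; rewrite -Ev E walk_last nbhdE eqxx.
have Hn0 : k0 != 0%N.
  apply/eqP => E; move: Hj; rewrite nbhdE -eq_csucc -Ev E.
  by rewrite (_ : walk 0 = csucc n3 j) // eqxx !orbT.
have Hn2 : k0.+1 != n.-1.
  by apply/eqP => E; move: Hj; rewrite nbhdE -Ev csucc_walk E walk_last eqxx orbT.
set a := k0.-1; have Ea : a.+1 = k0 by rewrite /a prednK // lt0n.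
exists a; split.
- by move: Hk0 Hn1 Hn2 Hn0; rewrite -Ea; lia.
- by apply/eqP; rewrite eq_sym -eq_csucc csucc_walk Ea Ev.
- by rewrite Ea Ev.
- by rewrite -Ev -Ea csucc_walk.
Qed.

Definition Pf x := (\sum_(0 <= k < x) u (walk k))%N.

Lemma PfS k : Pf k.+1 = (Pf k + u (walk k))%N.
Proof. by rewrite /Pf big_nat_recr. Qed.

Lemma locate a x t : (Pf a <= t)%N -> (t < Pf (a + x))%N ->
  exists k, [/\ (a <= k)%N, (k < a + x)%N & t \in iota (Pf k) (u (walk k))].
Proof.
move=> Ha; elim: x => [|x IH]; first by rewrite addn0 ltnNge Ha.
rewrite addnS PfS => Ht; case: (ltnP t (Pf (a + x))) => H.
  by case: (IH H) => k [H1 H2 H3]; exists k; split => //; rewrite ltnS ltnW.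
by exists (a + x); split; rewrite ?leq_addr ?ltnSn // mem_iota H Ht.
Qed.

Definition cover c : {set 'I_n} := [set l | (l == j) || [exists k : 'I_n.-1,
  (walk k == l) && has (fun t => t %% m == c) (iota (Pf k) (u l))]].

Lemma cover_count (i : 'I_n) :
  i != j -> (count (fun c => i \in cover c) (iota 0 m) <= u i)%N.
Proof.
move=> Hij; have [ki Hki Ei] := walk_surj i.
apply: leq_trans (count_residues_hit m (Pf ki) (u i)).
apply: sub_count => c; rewrite /cover inE (negbTE Hij) /= => /existsP [k /andP [/eqP Ek Hk]].
have Hkn : (k < n)%N by apply: leq_trans (ltn_ord k) (leq_pred n).
by rewrite -(walk_inj Hkn Hki (etrans Ek (esym Ei))).
Qed.

Lemma sum3_le (B : {set 'I_n}) x y z :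
  (forall w, w \in B -> [|| w == x, w == y | w == z]) ->
  (\sum_(i in B) u i <= u x + u y + u z)%N.
Proof.
move=> HB.
have E : forall w : 'I_n, \sum_(i < n) ((i == w) * u i)%N = u w.
  move=> w; rewrite (bigD1 w) //= eqxx mul1n big1 ?addn0 // => i /negbTE ->.
  by rewrite mul0n.
rewrite -E -(E y) -(E z) -!big_split /= big_mkcond /=.
apply: leq_sum => i _; case: ifP => // /HB /or3P [] /eqP ->; rewrite eqxx; lia.
Qed.

Hypothesis heavy : forall v : 'I_n, j \notin Nb v -> (m <= \sum_(i in Nb v) u i)%N.

Lemma cover_dom c : (c < m)%N -> dominating (cover c).
Proof.
move=> Hc; apply/forallP => v; apply/set0Pn.
case: (boolP (j \in Nb v)) => Hj.
  by exists j; rewrite inE Hj andbT /cover inE eqxx.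
have [a [Ha2 Epr Ev Esc]] := walk_nbhd Hj.
have Hsum := heavy Hj.
have Hsum3 : (\sum_(i in Nb v) u i <= u (walk a) + u (walk a.+1) + u (walk a.+2))%N.
  apply: sum3_le => w; rewrite nbhdE -Ev -Esc -Epr.
  by case/or3P => ->; rewrite ?orbT.
have HP : Pf (a + 3) = (Pf a + u (walk a) + u (walk a.+1) + u (walk a.+2))%N.
  by rewrite !addnS addn0 !PfS.
have [t [Ht1 Ht2 Ht3]] := residue_in_window (Pf a) Hc.
have Ht2' : (t < Pf (a + 3))%N by rewrite HP; lia.
have [k [Hk1 Hk2 Hk3]] := locate Ht1 Ht2'.
have Hkn : (k < n.-1)%N by lia.
exists (walk k); rewrite inE; apply/andP; split.
  rewrite /cover inE; apply/orP; right; apply/existsP; exists (Ordinal Hkn) => /=.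
  by rewrite eqxx /=; apply/hasP; exists t => //; apply/eqP.
rewrite nbhdE Esc Epr Ev.
have : [|| k == a, k == a.+1 | k == a.+2] by lia.
by case/or3P => /eqP ->; rewrite eqxx ?orbT.
Qed.

Lemma dominating_cover : exists Ss : seq {set 'I_n},
  [/\ size Ss = m, all (@dominating n) Ss &
  forall i : 'I_n, (count (fun S : {set 'I_n} => i \in S) Ss <= u i + (i == j) * m)%N].
Proof.
exists [seq cover c | c <- iota 0 m]; split.
- by rewrite size_map size_iota.
- by apply/allP => S /mapP [c]; rewrite mem_iota add0n => /andP [_ Hc] ->; apply: cover_dom.
- move=> i; rewrite count_map; case: (eqVneq i j) => [->|Hij].
    by rewrite mul1n; apply: leq_trans (count_size _ _) _; rewrite size_iota leq_addl.
  by rewrite mul0n addn0; exact: cover_count.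
Qed.

End Covering.

Section DominatingIdeal.
Variables (n : nat) (K : fieldType).
Hypothesis n3 : (2 < n)%N.
Local Notation R := {mpoly K[n]}.
Local Notation I := (DI_cycle n K).
Local Notation Nb := (@closed_nbhd n).
Local Open Scope ring_scope.

Definition dom_exp (m : nat) (u : 'X_{1..n}) := exists Ss : seq {set 'I_n},
  [/\ size Ss = m, all (@dominating n) Ss &
      forall i : 'I_n, (count (fun S : {set 'I_n} => i \in S) Ss <= u i)%N].

Lemma mesym1E (S : {set 'I_n}) i : mesym1 S i = (i \in S).
Proof. by rewrite /mesym1 mnmE. Qed.

Lemma prod_X_set (S : {set 'I_n}) : \prod_(i in S) ('X_i : R) = 'X_[mesym1 S].
Proof.
rewrite [RHS]mpolyXE_id big_mkcond /=; apply: eq_bigr => i _.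
by rewrite mesym1E; case: (i \in S); rewrite ?expr1 ?expr0.
Qed.

(* Every dominating set contains a minimal one, so its monomial lies in I. *)
Lemma dominating_in_DI (S : {set 'I_n}) : dominating S -> I 'X_[mesym1 S].
Proof.
move=> HS; have [S0 HS0 Hsub] := minset_exists (P := @dominating n) HS.
have Hle : (mesym1 S0 <= mesym1 S)%MM.
  by apply/mnm_lepP => i; rewrite !mesym1E; case: (boolP (i \in S0)) => // /(subsetP Hsub) ->.
rewrite -(submK Hle) mpolyXD; apply: idealMl; first exact: gen_ideal_is_ideal.
apply: gen_ideal_in; exists S0; split; last by rewrite prod_X_set.
case/minsetP: HS0 => H1 H2; apply/andP; split => //.
apply/forallP => T; apply/implyP => /properP [HT [x Hx Hnx]]; apply/negP => HdT.
by have E := H2 T HdT HT; move: Hnx; rewrite E Hx.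
Qed.

Lemma dom_exp_up m : upclosed (dom_exp m).
Proof.
move=> u v [Ss [H1 H2 H3]] /mnm_lepP Huv; exists Ss; split => // i.
exact: leq_trans (H3 i) (Huv i).
Qed.

Lemma dom_expD k (a b : 'X_{1..n}) : dom_exp 1 a -> dom_exp k b -> dom_exp k.+1 (a + b)%MM.
Proof.
move=> [[|S [|? ?]] [//= _ HS Ha]] [Ss [H1 H2 H3]].
exists (S :: Ss); split; first by rewrite /= H1.
  by rewrite /= H2 andbT; move: HS => /= /andP [].
move=> i; rewrite /= mnmDE; apply: leq_add; last exact: H3.
by have := Ha i; rewrite /= addn0.
Qed.

Lemma DI_dom_exp1 : subideal I (supp_in (dom_exp 1)).
Proof.
apply: gen_ideal_sub; first exact: supp_in_ideal (@dom_exp_up 1).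
move=> f [S [/andP [HS _] ->]]; rewrite prod_X_set; apply: supp_inX.
exists [:: S]; split => //=; first by rewrite HS.
by move=> i; rewrite addn0 mesym1E.
Qed.

Lemma DIpow_dom_exp m : subideal (ideal_pow I m) (supp_in (dom_exp m)).
Proof.
apply: gen_ideal_sub; first exact: supp_in_ideal (@dom_exp_up m).
move=> f [s [<- [Hs ->]]]; elim: s Hs => [|a s IH] Hs.
  by rewrite big_nil => u; rewrite msupp1 inE => /eqP ->; exists [::].
have Hs' : forall b, b \in s -> I b by move=> b Hb; apply: Hs; rewrite inE Hb orbT.
rewrite big_cons => u.
move=> /(supp_inM (DI_dom_exp1 (Hs a (mem_head _ _))) (IH Hs')) [x [y [Hx [Hy ->]]]].
exact: dom_expD.
Qed.

Lemma count_sum (Ss : seq {set 'I_n}) i :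
  (\sum_(S <- Ss) mesym1 S)%MM i = count (fun S : {set 'I_n} => i \in S) Ss.
Proof.
rewrite mnm_sumE; elim: Ss => [|X Ss IH]; first by rewrite big_nil.
by rewrite big_cons IH mesym1E.
Qed.

Lemma dom_exp_DIpow m : subideal (supp_in (dom_exp m)) (ideal_pow I m).
Proof.
apply: supp_in_subideal; first exact: gen_ideal_is_ideal.
move=> u [Ss [H1 H2 H3]].
set w := (\sum_(X <- Ss) mesym1 X)%MM.
have Hw : (w <= u)%MM by apply/mnm_lepP => i; rewrite count_sum.
rewrite -(submK Hw) mpolyXD; apply: idealMl; first exact: gen_ideal_is_ideal.
apply: gen_ideal_in; exists [seq 'X_[mesym1 X] | X <- Ss]; split; first by rewrite size_map.
split; last by rewrite big_map mprodXE.
by move=> a /mapP [X HX ->]; apply: dominating_in_DI; move/allP: H2; apply.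
Qed.

Lemma DIpowE m g : ideal_pow I m g <-> supp_in (dom_exp m) g.
Proof. by split; [apply: DIpow_dom_exp|apply: dom_exp_DIpow]. Qed.

(* A dominating set meets every N[v], so m of them give N[v]-degree >= m. *)
Lemma dom_exp_pdeg m u : dom_exp m u -> forall v, (m <= pdeg (Nb v) u)%N.
Proof.
move=> [Ss [<- H2 H3]] v; apply: (@leq_trans (\sum_(i in Nb v)
  count (fun S : {set 'I_n} => i \in S) Ss)); last by apply: leq_sum => i _; apply: H3.
elim: Ss H2 {H3} => [|X Ss IH] //= /andP [/forallP /(_ v) HX HSs].
rewrite big_split /= -add1n; apply: leq_add; last exact: IH.
case/set0Pn: HX => x; rewrite inE => /andP [Hx1 Hx2].
by rewrite (bigD1 x) //= Hx1 leq_addr.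
Qed.

Lemma pdeg_dom_exp1 u : (forall v, (1 <= pdeg (Nb v) u)%N) -> dom_exp 1 u.
Proof.
move=> H; exists [:: [set i | (0 < u i)%N]]; split => //=.
  rewrite andbT; apply/forallP => v; apply/set0Pn.
  by have [i Hi Hu] := pdeg_gt0 (H v); exists i; rewrite inE Hi andbT inE Hu.
by move=> i; rewrite addn0 inE; case: (u i).
Qed.

Lemma dom_exp_shift m (j : 'I_n) u :
  (forall v, j \notin Nb v -> (m <= pdeg (Nb v) u)%N) -> dom_exp m (u + U_(j) *+ m)%MM.
Proof.
move=> Hu; have [Ss [H1 H2 H3]] := @dominating_cover n n3 j m (fun i => u i) Hu.
by exists Ss; split => // i; rewrite mnmDE mulmnE mnm1E eq_sym; exact: H3.
Qed.

Lemma pdeg_mesym1 (A S : {set 'I_n}) : S :&: A != set0 -> (1 <= pdeg A (mesym1 S))%N.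
Proof.
case/set0Pn => x; rewrite inE => /andP [Hx1 Hx2].
by rewrite /pdeg (bigD1 x) //= mesym1E Hx1.
Qed.

Definition nbhd_prime (v : 'I_n) : R -> Prop := Qpow (Nb v) 1.

Lemma DI_nbhd_prime v : subideal I (nbhd_prime v).
Proof.
apply: gen_ideal_sub; first exact: Qpow_ideal.
move=> f [S [/andP [HS _] ->]]; rewrite prod_X_set; apply: supp_inX.
by apply: pdeg_mesym1; move/forallP: HS; apply.
Qed.

(* A prime containing I contains some nbhd_prime: otherwise the variables
   outside P would form a dominating set whose monomial lies in P. *)
Lemma prime_over_DI (P : R -> Prop) : prime_ideal P -> subideal I P ->
  exists v, subideal (nbhd_prime v) P.
Proof.
move=> HP HIP; apply: NNPP => H.
have Hv : forall v, exists2 i, i \in Nb v & ~ P 'X_i.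
  move=> v; apply: NNPP => C; apply: H; exists v.
  apply: Qpow1_sub; first by case: HP.
  by move=> i Hi; apply: NNPP => Hn; apply: C; exists i.
pose outside i := if excluded_middle_informative (P 'X_i) then false else true.
have HS : dominating [set i | outside i].
  apply/forallP => v; apply/set0Pn; have [i Hi Hn] := Hv v.
  by exists i; rewrite inE Hi andbT inE /outside; case: excluded_middle_informative.
have := HIP _ (dominating_in_DI HS); rewrite -prod_X_set -big_enum.
case/(prime_prod HP) => i; rewrite mem_enum inE /outside.
by case: excluded_middle_informative.
Qed.

Lemma nbhd_prime_sub v v' : subideal (nbhd_prime v') (nbhd_prime v) -> Nb v' = Nb v.
Proof.
move=> H; apply: (nbhd_sub_eq n3); apply/subsetP => i Hi.
have := H _ (@Qpow1_X n K _ _ Hi) U_(i)%MM; rewrite msuppX inE eqxx => /(_ isT).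
by case/pdeg_gt0 => k Hk; rewrite mnm1E; case: eqP => [->|].
Qed.

Lemma nbhd_prime_min v : is_min_prime I (nbhd_prime v).
Proof.
split; first exact: Qpow1_prime.
split; first exact: DI_nbhd_prime.
move=> Q HQ HIQ HQv; have [v' Hv'] := prime_over_DI HQ HIQ.
have E := nbhd_prime_sub (fun g Hg => HQv g (Hv' g Hg)).
by move=> g; rewrite /nbhd_prime -E; apply: Hv'.
Qed.

Lemma min_nbhd_prime P : is_min_prime I P -> exists v, same_ideal P (nbhd_prime v).
Proof.
move=> [HP [HIP Hmin]]; have [v Hv] := prime_over_DI HP HIP.
exists v => g; split; last exact: Hv.
exact: (Hmin _ (Qpow1_prime _ _) (DI_nbhd_prime v) Hv).
Qed.

Lemma nbhd_prime_colon v :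
  same_ideal (nbhd_prime v) (colon (ideal_pow I 1) 'X_[mesym1 (~: Nb v)]).
Proof.
move=> g; split.
  apply: supp_in_subideal; first exact: colon_ideal (gen_ideal_is_ideal _).
  move=> u Hu; rewrite /colon -mpolyXD; apply/DIpowE; apply: supp_inX; apply: pdeg_dom_exp1 => v'.
  rewrite pdegD; case: (boolP (Nb v' \subset Nb v)) => Hs.
    by rewrite (nbhd_sub_eq n3 Hs); apply: leq_trans Hu (leq_addr _ _).
  case/subsetPn: Hs => i Hi1 Hi2; apply: leq_trans (leq_addl _ _).
  by apply: pdeg_mesym1; apply/set0Pn; exists i; rewrite inE Hi1 andbT inE Hi2.
rewrite /colon => /DIpowE /(supp_in_weaken (fun u Hu => dom_exp_pdeg Hu v)) HQ.
case: (Qpow1_prime K (Nb v)) => _ [_ Pp]; case: (Pp _ _ HQ) => // /Qpow1_notX.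
by case; rewrite /pdeg big1 // => i Hi; rewrite mesym1E inE Hi.
Qed.

Lemma ass_DI_min P : is_ass (ideal_pow I 1) P -> is_min_prime I P.
Proof.
move=> [HP [f Hf]].
have HT : same_ideal P (colon (Qinter [seq Nb v | v <- enum 'I_n] 1) f).
  move=> g; rewrite Hf /colon DIpowE; split.
    by move=> H u Hu W /mapP [v _ ->]; exact: dom_exp_pdeg (H u Hu) v.
  move=> H u Hu; apply: pdeg_dom_exp1 => v; apply: H Hu _ _.
  by apply: map_f; rewrite mem_enum.
have [W /mapP [v _ ->] HW] := ass_Qinter (isT : (0 < 1)%N) HP HT.
by apply: min_prime_same (nbhd_prime_min v) => g; split => /HW.
Qed.

Lemma min_ass_DI P : is_min_prime I P -> is_ass (ideal_pow I 1) P.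
Proof.
move=> HP; have [v Hv] := min_nbhd_prime HP; split; first by case: HP.
by exists 'X_[mesym1 (~: Nb v)] => g; rewrite Hv; exact: nbhd_prime_colon.
Qed.

(* Let P = (I^m : f) be prime, m >= 2.  If some x_j is not in P, then P is
   also the colon of the intersection of the Q_{N[v]}^m with j not in N[v]
   (multiply by x_j^m and use dom_exp_shift), hence minimal by ass_Qinter;
   otherwise P contains every variable. *)
Lemma ass_DIpow m P : (2 <= m)%N -> is_ass (ideal_pow I m) P ->
  is_min_prime I P \/ same_ideal P (var_ideal [set: 'I_n]).
Proof.
move=> Hm [HP [f Hf]].
have Hf' : same_ideal P (colon (supp_in (dom_exp m)) f).
  by move=> g; rewrite Hf /colon DIpowE.
case: (classic (exists j, ~ P 'X_j)); last first.
  move=> H; right; apply: prime_all_vars => // j; apply: NNPP => Hj; apply: H; by exists j.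
move=> [j Hj]; left.
set Ws := [seq Nb v | v <- enum 'I_n & j \notin Nb v].
have HT : same_ideal P (colon (Qinter Ws m) f).
  move=> g; split.
    move=> /Hf' H u Hu W /mapP [v]; rewrite mem_filter => /andP [Hjv _] ->.
    exact: dom_exp_pdeg (H u Hu) v.
  rewrite /colon => H.
  have HX : supp_in (dom_exp m) ('X_[(U_(j) *+ m)%MM] * (g * f)).
    move=> u /(supp_inXM (w := (U_(j) *+ m)%MM) H) [a Ha ->]; rewrite addmC.
    apply: dom_exp_shift => v Hjv; apply: Ha; apply/mapP; exists v => //.
    by rewrite mem_filter Hjv mem_enum.
  have : P ('X_[(U_(j) *+ m)%MM] * g) by apply/Hf'; rewrite /colon -mulrA.
  case/(proj2 (proj2 HP)) => [|//].
  by rewrite -mpolyXn => /(prime_exp HP) /Hj.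
have [W /mapP [v _ ->] HW] := ass_Qinter (ltnW Hm) HP HT.
by apply: min_prime_same (nbhd_prime_min v) => g; split => /HW.
Qed.

End DominatingIdeal.

Theorem theorem3p9 (K : fieldType) (n : nat) :
  (3 <= n)%N -> nearly_normally_torsion_free (DI_cycle n K).
Proof.
move=> n3; split.
  exists (fun f : {mpoly K[n]} => exists S : {set 'I_n},
     minimal_dominating S /\ f = (\prod_(i in S) 'X_i)%R); split => //.
  by move=> f [S [_ ->]]; exists (mesym1 S); exact: prod_X_set.
exists 1%N, (var_ideal [set: 'I_n]); split => //; split.
  by exists [set: 'I_n].
split.
  move=> m /andP [H1 H2] P; have -> : m = 1%N by apply/eqP; rewrite eqn_leq H1 H2.
  by split; [exact: ass_DI_min|exact: min_ass_DI].
by move=> m Hm P HP; case: (ass_DIpow n3 (Hm : (2 <= m)%N) HP); [left|right].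
Qed.
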